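(* Let $0<p_1\le p_0\le\infty$ and $0<q_0<q_1\le\infty$, with $(p_0,p_1)\notin\{\infty\}\times(0,\infty)$. Then for every integer $A\ge0$ the embedding $$\ell^{q_0}\big(2^{-j/p_0}\cdot\ell^{p_0}\{1,\dots,2^j\}\big)_{j=A}^\infty\hookrightarrow\ell^{q_1}\big(2^{-j/p_1}\cdot\ell^{p_1}\{1,\dots,2^j\}\big)_{j=A}^\infty$$ is not finitely strictly singular.
   Context: For quasi-normed spaces $X_j$ and $q\in(0,\infty]$, $\ell^q(X_j)_{j=A}^\infty$ is the space of sequences $x=(x_j)_{j\ge A}$, $x_j\in X_j$, with $\|x\|=(\sum_j\|x_j\|_{X_j}^q)^{1/q}<\infty$ (supremum if $q=\infty$). For $\lambda>0$, $\lambda\cdot\ell^p\{1,\dots,N\}$ denotes $\mathbb{R}^N$ with quasi-norm $\lambda\|y\|_{\ell^p}$ (with the convention $2^{-j/\infty}=1$). Bernstein numbers: $b_n(T)=\sup\{\inf_{x\in X_n,\|x\|=1}\|Tx\|:\dim X_n=n\}$; $T$ is finitely strictly singular if $b_n(T)\to0$. *)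

From HB Require Import structures.
From mathcomp Require Import all_boot all_order all_algebra.
From mathcomp Require Import all_classical all_reals all_analysis.
Set Implicit Arguments. Unset Strict Implicit. Unset Printing Implicit Defensive.
Import Order.TTheory GRing.Theory Num.Theory.
Local Open Scope classical_set_scope.
Local Open Scope ring_scope.

(* Elements of the sequence spaces are represented as x : nat -> nat -> R,
   where x j is the j-th block, a vector of R^(2^j) whose coordinates
   1..2^j are stored at indices 0..2^j-1.  Exponents live in \bar R;
   the relevant ones are in (0, +oo]. *)

(* The weighted block quasi-norm  2^(-j/p) * ||y||_{l^p{1..2^j}}
   (with 2^(-j/oo) = 1). For finite p this equals
   (2^(-j) * sum_i |y_i|^p)^(1/p). *)
Definition block_qnorm {R : realType} (p : \bar R) (j : nat) (y : nat -> R)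
  : R :=
  match p with
  | r%:E => (((2 ^+ j)^-1 * \sum_(i < 2 ^ j) (`|y i| `^ r)) `^ r^-1)
  | +oo%E => \big[Num.max/0]_(i < 2 ^ j) `|y i|
  | -oo%E => 0 (* junk, never used *)
  end.

Definition seq_qnorm {R : realType} (q p : \bar R) (A : nat)
  (x : nat -> nat -> R) : \bar R :=
  match q with
  | r%:E => poweR (\sum_(A <= j <oo) ((block_qnorm p j (x j)) `^ r)%:E) r^-1
  | +oo%E => ereal_sup [set (block_qnorm p j (x j))%:E | j in [set j | (A <= j)%N]]
  | -oo%E => 0%E (* junk, never used *)
  end.

Definition seq_space {R : realType} (q p : \bar R) (A : nat) :
  set (nat -> nat -> R) :=
  [set x | (forall j i, ((j < A)%N \/ (2 ^ j <= i)%N) -> x j i = 0)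
           /\ (seq_qnorm q p A x < +oo)%E].

(* L parametrizes an n-dimensional subspace of the space S:
   L is linear and injective from R^n into S. *)
Definition nsubspace_param {R : realType} (S : set (nat -> nat -> R)) (n : nat)
  (L : 'rV[R]_n -> nat -> nat -> R) : Prop :=
  (forall (a : R) (u v : 'rV[R]_n),
     L (a *: u + v) = (fun j i => a * L u j i + L v j i))
  /\ injective L
  /\ (forall u, S (L u)).

Definition bernstein_embedding {R : realType} (q0 p0 q1 p1 : \bar R) (A n : nat)
  : \bar R :=
  ereal_sup
    [set ereal_inf [set seq_qnorm q1 p1 A (L v) |
                     v in [set v | seq_qnorm q0 p0 A (L v) = 1%E]]
    | L in [set L : 'rV[R]_n -> nat -> nat -> R | nsubspace_param (seq_space q0 p0 A) L]].

(* A map is finitely strictly singular iff its Bernstein numbers tend to 0. *)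
Definition embedding_FSS {R : realType} (q0 p0 q1 p1 : \bar R) (A : nat) : Prop :=
  (fun n => bernstein_embedding q0 p0 q1 p1 A n) @ \oo --> (0 : \bar R)%E.

From HB Require Import structures.
From mathcomp Require Import all_boot all_order all_algebra.
From mathcomp Require Import all_classical all_reals all_analysis.
From mathcomp Require Import ring lra.
Import Order.TTheory GRing.Theory Num.Theory.
Local Open Scope ring_scope.

(* Fill a single block of length [2^K], [K >= maxn A n], with combinations of
   its first [n] Rademacher vectors.  On this [n]-dimensional subspace both
   sequence quasi-norms reduce to block quasi-norms, i.e. to [L^p] norms on
   the uniform probability space with [2^K] points.  By Khintchine's
   inequality these norms are all equivalent on Rademacher sums for finite
   [p], with constants independent of [n] (and for [p0 = p1 = oo] they are
   equal), so all Bernstein numbers stay above a fixed [c > 0].  Khintchine's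
   inequality follows from the subgaussian bound [E exp(F) <= exp(2 |a|^2)]
   (for coefficients [|a_k| <= 1/2]), which controls every moment from above,
   and from a Paley-Zygmund argument on the second and fourth moments, which
   gives the lower bound. *)

Section RademacherSums.
Context {R : realType}.
Implicit Types (a b : nat -> R) (s : R).

Lemma sum_sqr_eq0 a K : \sum_(k < K) a k ^+ 2 = 0 -> forall k, (k < K)%N -> a k = 0.
Proof.
move=> /psumr_eq0P-/(_ (fun l _ => sqr_ge0 _)) sq0 k lt_kK.
by apply/eqP; rewrite -sqrf_eq0; apply/eqP; apply: (sq0 (Ordinal lt_kK)).
Qed.

(* For [i < 2^K], [rademacher_sum a K i = sum_(k < K) eps_k(i) a_k] where the
   sign vectors [eps(i)] run over all of [{-1, 1}^K]: the [i]-th coordinate of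
   [sum_k a_k r_k] for the Rademacher vectors [r_k] of [R^(2^K)]. *)
Fixpoint rademacher_sum a (K i : nat) : R :=
  if K is K'.+1 then
    if (i < 2 ^ K')%N then rademacher_sum a K' i + a K'
    else rademacher_sum a K' (i - 2 ^ K') - a K'
  else 0.

Lemma big_rademacher_sumS (g : R -> R) a K :
  \sum_(i < 2 ^ K.+1) g (rademacher_sum a K.+1 i) =
  \sum_(i < 2 ^ K) g (rademacher_sum a K i + a K) +
  \sum_(i < 2 ^ K) g (rademacher_sum a K i - a K).
Proof.
have -> : (2 ^ K.+1 = 2 ^ K + 2 ^ K)%N by rewrite expnS mul2n addnn.
rewrite big_split_ord /=; congr (_ + _); apply: eq_bigr => i _ /=.
  by rewrite ltn_ord.
by rewrite ltnNge leq_addr addKn.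
Qed.

Lemma rademacher_sum_lin s a b K i :
  rademacher_sum (fun k => s * a k + b k) K i =
  s * rademacher_sum a K i + rademacher_sum b K i.
Proof.
elim: K i => [|K IH] i /=; first by rewrite mulr0 addr0.
by case: ifP => _; rewrite IH; ring.
Qed.

Lemma rademacher_sum_eq0 a K i :
  (forall k, (k < K)%N -> a k = 0) -> rademacher_sum a K i = 0.
Proof.
elim: K i => [|K IH] i a0 //=.
have a0K k : (k < K)%N -> a k = 0 by move=> ?; apply/a0/ltnW.
by rewrite !IH // a0 // subr0 addr0 if_same.
Qed.

Lemma rademacher_sumZ s a K i :
  rademacher_sum (fun k => s * a k) K i = s * rademacher_sum a K i.
Proof.
have := rademacher_sum_lin s a (fun=> 0) K i.
by rewrite (@rademacher_sum_eq0 (fun=> 0)) // addr0; under eq_fun do rewrite addr0.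
Qed.

Lemma sum_rademacher_sum_sqr a K :
  \sum_(i < 2 ^ K) rademacher_sum a K i ^+ 2 = 2 ^+ K * \sum_(k < K) a k ^+ 2.
Proof.
elim: K => [|K IH]; first by rewrite big_ord1 big_ord0 expr0n mulr0.
rewrite (big_rademacher_sumS (fun x => x ^+ 2)) -big_split big_ord_recr /=.
rewrite exprS -mulrA mulrDr -IH.
have -> : 2 ^+ K * a K ^+ 2 = \sum_(i < 2 ^ K) a K ^+ 2.
  by rewrite sumr_const card_ord mulrC -natrX mulr_natr.
rewrite mulrDr !mulr_sumr -big_split /=.
by apply: eq_bigr => i _; ring.
Qed.

(* From [expR (-x) * (1 + x) <= 1] and its mirror image,
   [cosh x <= 1 / (1 - x^2) <= 1 + 2 x^2 <= expR (2 x^2)]. *)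
Lemma expR_addN_le (x : R) : x ^+ 2 <= 4^-1 ->
  expR x + expR (- x) <= 2 * expR (2 * x ^+ 2).
Proof.
move=> x2_le.
have := expR_ge1Dx (- x); have := expR_ge1Dx x; have := expR_ge1Dx (2 * x ^+ 2).
have := expRxMexpNx_1 x; have := expR_gt0 x; have := expR_gt0 (- x).
set u := expR x; set w := expR (- x) => w_gt0 u_gt0 uw1 ? ? ?.
have [? ?] : - 2^-1 <= x /\ x <= 2^-1 by split; nra.
have : (1 - x ^+ 2) * (u + w) <= 2 by nra.
nra.
Qed.

Lemma sum_expR_rademacher_sum_le a K :
  (forall k, (k < K)%N -> a k ^+ 2 <= 4^-1) ->
  \sum_(i < 2 ^ K) expR (rademacher_sum a K i) <=
  2 ^+ K * expR (2 * \sum_(k < K) a k ^+ 2).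
Proof.
elim: K => [|K IH] a_small; first by rewrite big_ord1 big_ord0 mulr0 expR0 mul1r.
rewrite (big_rademacher_sumS expR) big_ord_recr /=.
have -> : \sum_(i < 2 ^ K) expR (rademacher_sum a K i + a K) +
          \sum_(i < 2 ^ K) expR (rademacher_sum a K i - a K) =
          (\sum_(i < 2 ^ K) expR (rademacher_sum a K i)) * (expR (a K) + expR (- a K)).
  by rewrite -big_split mulr_suml; apply: eq_bigr => i _; rewrite mulrDr -!expRD.
have sum_ge0 : 0 <= \sum_(i < 2 ^ K) expR (rademacher_sum a K i).
  by apply: sumr_ge0 => i _; apply: expR_ge0.
have IH' := IH (fun k lt_kK => a_small k (ltnW lt_kK)).
have := ler_pM sum_ge0 _ IH' (expR_addN_le _ (a_small K (ltnSn K))).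
move=> /(_ (addr_ge0 (expR_ge0 _) (expR_ge0 _))) /le_trans; apply.
rewrite [2 ^+ K.+1]exprS mulrDr expRD le_eqVlt; apply/orP; left; apply/eqP; ring.
Qed.

Lemma sum_cosh_rademacher_sum_le a K : \sum_(k < K) a k ^+ 2 = 1 ->
  \sum_(i < 2 ^ K) (expR (rademacher_sum a K i / 2) + expR (- (rademacher_sum a K i / 2)))
  <= 2 ^+ K.+1 * expR 2^-1.
Proof.
move=> a_normed.
have half_small (e : R) : e ^+ 2 = 4^-1 ->
    forall k, (k < K)%N -> (e * a k) ^+ 2 <= 4^-1.
  move=> e2 k lt_kK; rewrite exprMn e2 ler_piMr // -a_normed.
  by rewrite (bigD1 (Ordinal lt_kK)) //= lerDl sumr_ge0 // => l _; apply: sqr_ge0.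
have half_bound (e : R) : e ^+ 2 = 4^-1 ->
    \sum_(i < 2 ^ K) expR (e * rademacher_sum a K i) <= 2 ^+ K * expR 2^-1.
  move=> e2; have sum_sq : \sum_(k < K) (e * a k) ^+ 2 = 4^-1.
    by under eq_bigr do rewrite exprMn e2; rewrite -mulr_sumr a_normed mulr1.
  have := sum_expR_rademacher_sum_le _ K (half_small e e2).
  rewrite sum_sq (_ : 2 * 4^-1 = 2^-1); last by field.
  by under eq_bigr do rewrite rademacher_sumZ.
have e2 : (2^-1 : R) ^+ 2 = 4^-1 by rewrite exprVn -natrX.
rewrite [leRHS](_ : _ = 2 ^+ K * expR 2^-1 + 2 ^+ K * expR 2^-1); last first.
  by rewrite exprS; ring.
rewrite big_split; apply: lerD.
  by under eq_bigr do rewrite mulrC; apply: half_bound.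
by under eq_bigr do rewrite -mulrN mulrC; apply: half_bound; rewrite sqrrN.
Qed.

Lemma normr_exprS_le_cosh (t : R) m :
  `|t| ^+ m.+1 <= (m.+1)`!%:R * 2 ^+ m.+1 * (expR (t / 2) + expR (- (t / 2))).
Proof.
have exp_abs : expR (`|t| / 2) <= expR (t / 2) + expR (- (t / 2)).
  case: (lerP 0 t) => [t_ge0|t_lt0].
    by rewrite ger0_norm // lerDl expR_ge0.
  by rewrite ltr0_norm // mulNr lerDr expR_ge0.
have := expR_ge1Dxn m (divr_ge0 (normr_ge0 t) (ler0n _ 2)).
rewrite expr_div_n => taylor.
have fact_gt0 : 0 < (m.+1)`!%:R :> R by rewrite ltr0n fact_gt0.
rewrite -ler_pdivrMl ?mulr_gt0 ?exprn_gt0 //; apply: le_trans exp_abs.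
rewrite (_ : _^-1 * _ = `|t| ^+ m.+1 / 2 ^+ m.+1 / (m.+1)`!%:R); first lra.
by field; rewrite !gt_eqF ?exprn_gt0.
Qed.

Lemma rademacher_moment_le m : exists2 C : R, 0 < C & forall a K,
  \sum_(k < K) a k ^+ 2 = 1 ->
  \sum_(i < 2 ^ K) `|rademacher_sum a K i| ^+ m.+1 <= C * 2 ^+ K.
Proof.
pose c : R := (m.+1)`!%:R * 2 ^+ m.+1.
have c_gt0 : 0 < c by rewrite mulr_gt0 ?exprn_gt0 ?ltr0n ?fact_gt0.
exists (c * (2 * expR 2^-1)) => [|a K a_normed].
  by rewrite !mulr_gt0 ?expR_gt0.
apply: le_trans (ler_sum _ (fun i _ => normr_exprS_le_cosh _ m)) _.
rewrite -mulr_sumr -mulrA ler_pM2l // mulrAC -exprS.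
exact: sum_cosh_rademacher_sum_le.
Qed.

Lemma sqr_le_indicator (t C : R) : 0 < C ->
  t ^+ 2 <= 2^-1 + `|t| ^+ 4 / (4 * C) + C * (2^-1 <= t ^+ 2)%R%:R.
Proof.
move=> C_gt0.
have -> : `|t| ^+ 4 = (t ^+ 2) ^+ 2 by rewrite -exprM -normrX ger0_norm ?exprn_even_ge0.
have quart_ge0 : 0 <= (t ^+ 2) ^+ 2 / (4 * C) by rewrite divr_ge0 ?sqr_ge0 ?mulr_ge0 ?ltW.
case: (lerP 2^-1 (t ^+ 2)) => [t2_ge|t2_lt]; rewrite ?mulr1 ?mulr0; last lra.
suff : t ^+ 2 - C <= (t ^+ 2) ^+ 2 / (4 * C) by lra.
rewrite ler_pdivlMr ?mulr_gt0 //; have := sqr_ge0 (t ^+ 2 - 2 * C); nra.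
Qed.

(* Paley-Zygmund: the second moment is [2^K] and the fourth one is [O(2^K)]. *)
Lemma rademacher_large_ge : exists2 c : R, 0 < c & forall a K,
  \sum_(k < K) a k ^+ 2 = 1 ->
  c * 2 ^+ K <= \sum_(i < 2 ^ K) (2^-1 <= rademacher_sum a K i ^+ 2)%R%:R.
Proof.
have [C C_gt0 fourth_le] := rademacher_moment_le 3.
exists (4 * C)^-1 => [|a K a_normed]; first by rewrite invr_gt0 mulr_gt0.
pose F i := rademacher_sum a K i.
have : \sum_(i < 2 ^ K) F i ^+ 2 <= \sum_(i < 2 ^ K)
    (2^-1 + `|F i| ^+ 4 / (4 * C) + C * (2^-1 <= F i ^+ 2)%R%:R).
  by apply: ler_sum => i _; apply: sqr_le_indicator.
rewrite sum_rademacher_sum_sqr a_normed mulr1 !big_split /= -mulr_suml -mulr_sumr.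
rewrite sumr_const card_ord -[2^-1 *+ _]mulr_natr natrX -/(F _).
set N := 2 ^+ K; set G := \sum_(i < _) _%:R; set M := \sum_(i < _) _ ^+ 4.
have : M / (4 * C) <= N / 4.
  rewrite ler_pdivrMr ?mulr_gt0 // (_ : N / 4 * (4 * C) = C * N) ?fourth_le //.
  by field.
move=> ? ?; rewrite ler_pdivrMl ?mulr_gt0 //; lra.
Qed.

Lemma rademacher_powR_ge r : 0 < r -> exists2 c : R, 0 < c & forall a K,
  \sum_(k < K) a k ^+ 2 = 1 ->
  c * 2 ^+ K <= \sum_(i < 2 ^ K) `|rademacher_sum a K i| `^ r.
Proof.
move=> r_gt0; have [c c_gt0 large_ge] := rademacher_large_ge.
exists (2^-1 `^ r * c) => [|a K a_normed]; first by rewrite mulr_gt0 ?powR_gt0.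
rewrite -mulrA; apply: le_trans (ler_wpM2l (powR_ge0 _ _) (large_ge a K a_normed)) _.
rewrite mulr_sumr; apply: ler_sum => i _.
case: (lerP 2^-1 (rademacher_sum a K i ^+ 2)) => [large|_]; rewrite ?mulr0 ?powR_ge0 // mulr1.
apply: ge0_ler_powR; rewrite ?nnegrE ?(ltW r_gt0) //.
rewrite -(real_normK (num_real (rademacher_sum a K i))) in large.
have := normr_ge0 (rademacher_sum a K i); nra.
Qed.

Lemma powR_le_1DexprS (t p : R) m : 0 <= t -> 0 < p -> p <= m.+1%:R ->
  t `^ p <= 1 + t ^+ m.+1.
Proof.
move=> t_ge0 p_gt0 p_le.
case: (lerP t 1) => [t_le1|t_gt1].
  apply: le_trans (_ : 1 <= _); last by rewrite lerDl exprn_ge0.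
  have : t `^ p <= 1 `^ p by apply: ge0_ler_powR; rewrite ?nnegrE ?(ltW p_gt0).
  by rewrite powR1.
rewrite -powR_mulrn //; apply: le_trans (ler_powR (ltW t_gt1) p_le) _.
by rewrite lerDr.
Qed.

Lemma rademacher_powR_le r : 0 < r -> exists2 C : R, 0 < C & forall a K,
  \sum_(k < K) a k ^+ 2 = 1 ->
  \sum_(i < 2 ^ K) `|rademacher_sum a K i| `^ r <= C * 2 ^+ K.
Proof.
move=> r_gt0; set m := Num.Def.archi_bound r.
have r_le : r <= m.+1%:R.
  by apply: le_trans (ltW (archi_boundP (ltW r_gt0))) _; rewrite ler_nat.
have [C C_gt0 moment_le] := rademacher_moment_le m.
exists (1 + C) => [|a K a_normed]; first by rewrite addr_gt0.
apply: (@le_trans _ _ (\sum_(i < 2 ^ K) (1 + `|rademacher_sum a K i| ^+ m.+1))).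
  by apply: ler_sum => i _; apply: powR_le_1DexprS.
by rewrite big_split sumr_const card_ord mulrDl mul1r lerD ?moment_le // natrX.
Qed.

Lemma rademacher_sum_coef_eq0 a K :
  (forall i, (i < 2 ^ K)%N -> rademacher_sum a K i = 0) ->
  forall k, (k < K)%N -> a k = 0.
Proof.
move=> F0; apply: sum_sqr_eq0.
have : 2 ^+ K * \sum_(l < K) a l ^+ 2 = 0.
  by rewrite -sum_rademacher_sum_sqr big1 // => i _; rewrite F0 ?expr0n.
by move/eqP; rewrite mulf_eq0 expf_eq0 pnatr_eq0 andbF /= => /eqP.
Qed.
End RademacherSums.

Section BlockNorms.
Context {R : realType}.
Implicit Types (p : \bar R) (r s c : R) (y z : nat -> R).

Lemma mean_powR_ge0 r j y : 0 <= (2 ^+ j)^-1 * \sum_(i < 2 ^ j) `|y i| `^ r.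
Proof. by rewrite mulr_ge0 ?invr_ge0 ?exprn_ge0 // sumr_ge0 // => i _; apply: powR_ge0. Qed.

Lemma block_qnorm_ge0 p j y : 0 <= block_qnorm p j y.
Proof.
case: p => [r| |] //=; first exact: powR_ge0.
by elim/big_ind: _ => // x x' x_ge0 _; rewrite le_max x_ge0.
Qed.

Lemma eq_block_qnorm p j y z : (forall i, (i < 2 ^ j)%N -> y i = z i) ->
  block_qnorm p j y = block_qnorm p j z.
Proof.
move=> eq_yz; case: p => [r| |]; rewrite /block_qnorm.
- by congr (_ `^ _); congr (_ * _); apply: eq_bigr => i _; rewrite eq_yz.
- by apply: eq_bigr => i _; rewrite eq_yz.
- by [].
Qed.

Lemma block_qnorm0 p j : (0 < p)%E -> block_qnorm p j (fun=> 0) = 0.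
Proof.
case: p => [r| |] //= r_gt0.
  by rewrite big1 ?mulr0 ?powR0 ?invr_eq0 ?gt_eqF // => i _; rewrite normr0 powR0 ?gt_eqF.
by elim/big_ind: _ => // [x x' -> ->|i _]; rewrite ?maxxx ?normr0.
Qed.

Lemma block_qnormZ r s j y : 0 < r -> 0 <= s ->
  block_qnorm r%:E j (fun i => s * y i) = s * block_qnorm r%:E j y.
Proof.
move=> r_gt0 s_ge0 /=.
under eq_bigr do rewrite normrM (ger0_norm s_ge0) powRM //.
by rewrite -mulr_sumr mulrCA powRM ?powR_ge0 ?mean_powR_ge0 // -powRrM mulfV ?gt_eqF // powRr1.
Qed.

Lemma block_qnorm_ge r c j y : 0 < r -> 0 <= c ->
  c * 2 ^+ j <= \sum_(i < 2 ^ j) `|y i| `^ r -> c `^ r^-1 <= block_qnorm r%:E j y.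
Proof.
move=> r_gt0 c_ge0 sum_ge /=.
apply: ge0_ler_powR; rewrite ?nnegrE ?invr_ge0 ?(ltW r_gt0) ?mean_powR_ge0 //.
by rewrite mulrC ler_pdivlMr ?exprn_gt0.
Qed.

Lemma block_qnorm_le r C j y : 0 < r -> 0 <= C ->
  \sum_(i < 2 ^ j) `|y i| `^ r <= C * 2 ^+ j -> block_qnorm r%:E j y <= C `^ r^-1.
Proof.
move=> r_gt0 C_ge0 sum_le /=.
apply: ge0_ler_powR; rewrite ?nnegrE ?invr_ge0 ?(ltW r_gt0) ?mean_powR_ge0 //.
by rewrite mulrC ler_pdivrMr ?exprn_gt0.
Qed.

Lemma khintchine r0 r1 : 0 < r0 -> 0 < r1 -> exists2 c : R, 0 < c &
  forall (a : nat -> R) j, c * block_qnorm r0%:E j (rademacher_sum a j) <=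
              block_qnorm r1%:E j (rademacher_sum a j).
Proof.
move=> r0_gt0 r1_gt0.
have [c1 c1_gt0 lower] := rademacher_powR_ge _ r1_gt0.
have [C0 C0_gt0 upper] := rademacher_powR_le _ r0_gt0.
have C0r_gt0 : 0 < C0 `^ r0^-1 by rewrite powR_gt0.
exists (c1 `^ r1^-1 / C0 `^ r0^-1) => [|a j]; first by rewrite divr_gt0 ?powR_gt0.
pose S := \sum_(k < j) a k ^+ 2.
have [S0|S_neq0] := eqVneq S 0.
  have F0 i : rademacher_sum a j i = 0.
    exact/rademacher_sum_eq0/sum_sqr_eq0.
  rewrite (@eq_block_qnorm _ _ _ (fun=> 0)) => [|i _]; last exact: F0.
  by rewrite block_qnorm0 ?lte_fin // mulr0 block_qnorm_ge0.
have S_gt0 : 0 < S by rewrite lt_def S_neq0 sumr_ge0 // => k _; apply: sqr_ge0.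
pose s := Num.sqrt S; have s_gt0 : 0 < s by rewrite sqrtr_gt0.
pose b k := a k / s.
have b_normed : \sum_(k < j) b k ^+ 2 = 1.
  by under eq_bigr do rewrite expr_div_n; rewrite -mulr_suml sqr_sqrtr ?ltW // mulfV ?gt_eqF.
have -> : rademacher_sum a j = fun i => s * rademacher_sum b j i.
  apply: funext => i; rewrite -rademacher_sumZ; congr rademacher_sum.
  by apply: funext => k; rewrite /b mulrC divfK ?gt_eqF.
rewrite !block_qnormZ ?(ltW s_gt0) // mulrCA ler_wpM2l ?(ltW s_gt0) //.
apply: le_trans (block_qnorm_ge _ _ _ _ r1_gt0 (ltW c1_gt0) (lower b j b_normed)).
rewrite mulrAC ler_pdivrMr // ler_wpM2l ?powR_ge0 //.
exact: block_qnorm_le _ _ _ _ r0_gt0 (ltW C0_gt0) (upper b j b_normed).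
Qed.

Lemma block_qnorm_rademacher_equiv p0 p1 : (0 < p1)%E -> (p1 <= p0)%E ->
  ~ (p0 = +oo /\ p1 < +oo)%E ->
  exists2 c : R, 0 < c & forall (a : nat -> R) j,
    c * block_qnorm p0 j (rademacher_sum a j) <= block_qnorm p1 j (rademacher_sum a j).
Proof.
case: p1 => [r1| |] //; case: p0 => [r0| |] // p1_gt0 p10 not_inf.
- have r1_gt0 : 0 < r1 by rewrite -lte_fin.
  by apply: khintchine r1_gt0; rewrite -lte_fin (lt_le_trans p1_gt0).
- by case: not_inf; rewrite ltry.
- by exists 1 => // a j; rewrite mul1r.
Qed.

End BlockNorms.

Section Embedding.
Context {R : realType}.
Implicit Types (p q : \bar R) (x : nat -> nat -> R).

Lemma seq_qnorm_block q p A j x : (A <= j)%N -> (0 < q)%E ->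
  (forall j' : nat, j' != j -> block_qnorm p j' (x j') = 0) ->
  seq_qnorm q p A x = (block_qnorm p j (x j))%:E.
Proof.
move=> le_Aj q_gt0 x0.
case: q q_gt0 => [r| |] //= r_gt0.
  have -> : (\sum_(A <= k <oo) ((block_qnorm p k (x k)) `^ r)%:E)%E
      = ((block_qnorm p j (x j)) `^ r)%:E.
    apply: (@lim_near_cst _ (@ereal_hausdorff R)); near=> n.
    have lt_jn : (j < n)%N by near: n; exists j.+1.
    rewrite (big_cat_nat le_Aj (ltnW lt_jn)) /= (@big_ltn _ _ _ j n) //.
    have r_neq0 : r != 0 by rewrite gt_eqF.
    rewrite !big1_seq ?add0e ?adde0 // => k /andP[_]; rewrite mem_index_iota.
      by move=> /andP[lt_jk _]; rewrite x0 ?powR0 // (gtn_eqF lt_jk).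
    by move=> /andP[_ lt_kj]; rewrite x0 ?powR0 // (ltn_eqF lt_kj).
  by rewrite poweR_EFin -powRrM mulfV ?gt_eqF // powRr1 // block_qnorm_ge0.
apply/le_anti/andP; split.
  apply: ge_ereal_sup => _ [k _ <-].
  have [->//|neq_kj] := eqVneq k j.
  by rewrite (x0 k neq_kj) lee_fin block_qnorm_ge0.
by apply: ereal_sup_ubound; exists j.
Unshelve. all: by end_near.
Qed.

Definition row_coef {n} (v : 'rV[R]_n) (k : nat) : R :=
  if insub k is Some l then v 0 l else 0.

Lemma row_coef_ord n (v : 'rV[R]_n) (l : 'I_n) : row_coef v l = v 0 l.
Proof. by rewrite /row_coef valK. Qed.

Lemma row_coef_lin n (c : R) (u w : 'rV[R]_n) k :
  row_coef (c *: u + w) k = c * row_coef u k + row_coef w k.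
Proof. by rewrite /row_coef; case: insubP => [l _ _|_]; rewrite ?mxE ?mulr0 ?addr0. Qed.

(* [v] is sent to [sum_k v_k r_k], the [r_k] being the first [n] Rademacher
   vectors of the single block [maxn A n]: this block lies in the range
   [j >= A] and carries at least [n] Rademacher vectors. *)
Definition rademacher_embedding A {n} (v : 'rV[R]_n) : nat -> nat -> R :=
  fun j i => if (j == maxn A n) && (i < 2 ^ j)%N
             then rademacher_sum (row_coef v) j i else 0.

Lemma seq_qnorm_rademacher_embedding q p A n (v : 'rV[R]_n) :
  (0 < q)%E -> (0 < p)%E ->
  seq_qnorm q p A (rademacher_embedding A v) =
  (block_qnorm p (maxn A n) (rademacher_sum (row_coef v) (maxn A n)))%:E.
Proof.
move=> q_gt0 p_gt0; rewrite (@seq_qnorm_block _ _ _ (maxn A n)) ?leq_maxl //.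
  by congr (_%:E); apply: eq_block_qnorm => i lt_i; rewrite /rademacher_embedding eqxx lt_i.
move=> j neq_j; rewrite -(block_qnorm0 _ j p_gt0); apply: eq_block_qnorm => i _.
by rewrite /rademacher_embedding (negbTE neq_j).
Qed.

Lemma nsubspace_param_rademacher_embedding q p A n : (0 < q)%E -> (0 < p)%E ->
  nsubspace_param (seq_space q p A) (@rademacher_embedding A n).
Proof.
move=> q_gt0 p_gt0; split; [|split].
- move=> c u w; apply: funext => j; apply: funext => i; rewrite /rademacher_embedding.
  case: ifP => _; last by rewrite mulr0 addr0.
  by rewrite -rademacher_sum_lin; congr rademacher_sum; apply: funext => k; apply: row_coef_lin.
- move=> u w eq_uw; set J := maxn A n.
  have diff0 : forall i, (i < 2 ^ J)%N -> rademacher_sum (row_coef (-1 *: w + u)) J i = 0.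
    move=> i lt_i; have := congr1 (fun x => x J i) eq_uw.
    rewrite /rademacher_embedding eqxx lt_i /= => eq_i.
    rewrite (_ : row_coef _ = fun k => -1 * row_coef w k + row_coef u k).
      by rewrite rademacher_sum_lin eq_i mulN1r addNr.
    by apply: funext => k; apply: row_coef_lin.
  apply/rowP => l; have lt_lJ : (l < J)%N := leq_trans (ltn_ord l) (leq_maxr A n).
  have := rademacher_sum_coef_eq0 _ _ diff0 _ lt_lJ.
  by rewrite row_coef_ord !mxE mulN1r addrC => /subr0_eq.
- move=> v; split; last by rewrite seq_qnorm_rademacher_embedding // ltry.
  move=> j i out_ji; rewrite /rademacher_embedding; case: eqP => //= eq_j.
  case: out_ji => [|le_i]; first by rewrite eq_j ltnNge leq_maxl.
  by rewrite ltnNge le_i.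
Qed.

Lemma bernstein_embedding_ge q0 p0 q1 p1 A n (c : R) :
  (0 < q0)%E -> (0 < p0)%E -> (0 < q1)%E -> (0 < p1)%E ->
  (forall (a : nat -> R) j, c * block_qnorm p0 j (rademacher_sum a j) <=
                            block_qnorm p1 j (rademacher_sum a j)) ->
  (c%:E <= bernstein_embedding q0 p0 q1 p1 A n)%E.
Proof.
move=> q0_gt0 p0_gt0 q1_gt0 p1_gt0 equiv; apply: le_ereal_sup_tmp.
exists (ereal_inf [set seq_qnorm q1 p1 A (rademacher_embedding A v) |
  v in [set v : 'rV[R]_n | seq_qnorm q0 p0 A (rademacher_embedding A v) = 1%E]]).
  by exists (rademacher_embedding A) => //; apply: nsubspace_param_rademacher_embedding.
apply: le_ereal_inf_tmp => _ [v /= norm1 <-].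
rewrite !seq_qnorm_rademacher_embedding // in norm1 *; case: norm1 => norm1.
by rewrite lee_fin -[c]mulr1 -norm1 equiv.
Qed.

End Embedding.

Local Open Scope ereal_scope.

Theorem proposition3p8 (R : realType) (p0 p1 q0 q1 : \bar R) (A : nat) :
  0 < p1 -> p1 <= p0 -> 0 < q0 -> q0 < q1 ->
  ~ (p0 = +oo /\ p1 < +oo) ->
  ~ embedding_FSS q0 p0 q1 p1 A.
Proof.
move=> p1_gt0 p10 q0_gt0 q01 not_inf fss.
have [c c_gt0 equiv] := block_qnorm_rademacher_equiv _ _ p1_gt0 p10 not_inf.
have bernstein_ge n : c%:E <= bernstein_embedding q0 p0 q1 p1 A n.
  apply: bernstein_embedding_ge equiv => //; first exact: lt_le_trans p1_gt0 p10.
  exact: lt_trans q0_gt0 q01.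
have := @lime_ge _ _ eventually_filter _ _ _ (cvgP _ fss)
  (nearW eventually_filter bernstein_ge).
by rewrite (cvg_lim _ fss) // lee_fin leNgt c_gt0.
Qed.
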